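(* Let $\mathscr{P}_1$ and $\mathscr{P}_2$ be two positions of impartial combinatorial games played under the normal play convention, and consider their sum $\mathscr{P}_1+\mathscr{P}_2$ (independent components, a move consists of a move in exactly one component). Suppose a solution tree $S$ for $\mathscr{P}_1+\mathscr{P}_2$ has been computed, i.e. the outcome of every node of $S$ is known. Then, using only the nodes of $S$ and their outcomes, without computing the outcome of any other node, one can determine the nimber of one of the two components $\mathscr{P}_1$, $\mathscr{P}_2$, and whether the nimber of the other component is equal to it or different from it.
   Context: An impartial combinatorial game: two players move alternately with perfect information and no chance, and the same moves are available to both players from every position; under the normal play convention the player who cannot move loses. An option of a position $\mathscr{P}$ is a position reachable from $\mathscr{P}$ in one move. The outcome of a position is W (winning) if the player to move has a winning strategy and L (losing) otherwise: terminal positions are L, a position is W iff it has at least one option that is L, and L iff all its options are W. The sum $\mathscr{P}_1+\mathscr{P}_2$ is the position whose options are $\mathscr{P}_1'+\mathscr{P}_2$ for $\mathscr{P}_1'$ an option of $\mathscr{P}_1$ and $\mathscr{P}_1+\mathscr{P}_2'$ for $\mathscr{P}_2'$ an option of $\mathscr{P}_2$. A solution tree for a position $\mathscr{Q}$ is a subset $S$ of the nodes of the game tree of $\mathscr{Q}$ (the positions reachable from $\mathscr{Q}$, with edges from a position to its options), containing $\mathscr{Q}$, together with the outcomes of its nodes, such that every losing node of $S$ has all its options in $S$ and every winning node of $S$ has at least one losing option in $S$. The nimber of a position is defined recursively as the Mex (least non-negative integer not in the set) of the nimbers of its options; terminal positions have nimber $0$. By the Sprague–Grundy theory, $\mathscr{P}_1+\mathscr{P}_2$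 is losing iff the nimbers of $\mathscr{P}_1$ and $\mathscr{P}_2$ are equal. *)

From Stdlib Require Import List Arith.
Import ListNotations.
Set Implicit Arguments.

Section Games.
Variable G : Type.
Variable opts : G -> list G.

Definition is_option (x y : G) : Prop := In y (opts x).

Definition game_wf : Prop := well_founded (fun y x => is_option x y).

Inductive losing : G -> Prop :=
| LosingI x : (forall y, is_option x y -> winning y) -> losing x
with winning : G -> Prop :=
| WinningI x y : is_option x y -> losing y -> winning x.

Definition is_mex (l : list nat) (n : nat) : Prop :=
  ~ In n l /\ (forall k, k < n -> In k l).

Inductive nimber_of : G -> nat -> Prop :=
| NimberI x (f : G -> nat) n :
    (forall y, is_option x y -> nimber_of y (f y)) ->
    is_mex (map f (opts x)) n ->
    nimber_of x n.

Inductive reachable (x : G) : G -> Prop :=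
| reach_refl : reachable x x
| reach_step y z : reachable x y -> is_option y z -> reachable x z.
End Games.

Definition sum_opts {G1 G2 : Type} (opts1 : G1 -> list G1) (opts2 : G2 -> list G2)
  (p : G1 * G2) : list (G1 * G2) :=
  map (fun y => (y, snd p)) (opts1 (fst p)) ++ map (fun y => (fst p, y)) (opts2 (snd p)).

Definition solution_tree {G : Type} (opts : G -> list G) (q : G) (S : G -> Prop) : Prop :=
  S q /\
  (forall x, S x -> reachable opts q x) /\
  (forall x, S x -> losing opts x -> forall y, is_option opts x y -> S y) /\
  (forall x, S x -> winning opts x -> exists y, is_option opts x y /\ losing opts y /\ S y).

(* The information available from a solution tree S of the sum P1 + P2:
   the root, the nodes of S, the option edges between nodes of S, and the
   outcomes of the nodes of S (the set of losing nodes of S). *)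
Definition sol_data {G1 G2 : Type} : Type :=
  ((G1 * G2) * ((G1 * G2) -> Prop) * ((G1 * G2) -> (G1 * G2) -> Prop)
   * ((G1 * G2) -> Prop))%type.

Definition data_of {G1 G2 : Type} (opts1 : G1 -> list G1) (opts2 : G2 -> list G2)
  (P1 : G1) (P2 : G2) (S : G1 * G2 -> Prop) : @sol_data G1 G2 :=
  ((P1, P2), S,
   (fun p q => S p /\ S q /\ is_option (sum_opts opts1 opts2) p q),
   (fun p => S p /\ losing (sum_opts opts1 opts2) p)).

(* By the Sprague-Grundy theorem a node (x, y) of the sum is losing iff
   nim x = nim y.  Read the solution tree bottom-up.  At a winning node the
   tree exhibits a losing option, which lies in one component: if it is
   (x', y), then nim y = nim x' is the nimber known at that option, and
   nim x <> nim y.  At a losing node all options are in the tree and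
   nim x = nim y; either some option (x', y) already determines nim y, or
   every option (x', y) determines nim x', and nim x is the mex of these.
   Which component a move changes is visible on the nodes themselves, so
   the whole computation uses only the nodes, edges and outcomes of the
   tree. *)
From Stdlib Require Import List Arith Lia Wf_nat ClassicalEpsilon.
Set Implicit Arguments.
Unset Strict Implicit.

Lemma is_mex_exists (l : list nat) : exists n, is_mex l n.
Proof.
  assert (Hout : exists n, ~ In n l).
  { exists (S (list_max l)). intros Hin.
    assert (Hle := proj1 (list_max_le l (list_max l)) (le_n _)).
    rewrite Forall_forall in Hle. specialize (Hle _ Hin). lia. }
  destruct (dec_inh_nat_subset_has_unique_least_element (fun n => ~ In n l))
    as [n [[Hn Hleast] _]]; [|exact Hout|].
  - intros n. destruct (in_dec Nat.eq_dec n l); tauto.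
  - exists n. split; [exact Hn|]. intros k Hk.
    destruct (in_dec Nat.eq_dec k l) as [Hin|Hnin]; [exact Hin|].
    specialize (Hleast k Hnin). lia.
Qed.

Lemma is_mex_unique (l : list nat) (n m : nat) : is_mex l n -> is_mex l m -> n = m.
Proof.
  intros [Hn Hbelow_n] [Hm Hbelow_m].
  destruct (lt_eq_lt_dec n m) as [[Hlt|Heq]|Hlt]; [|exact Heq|].
  - exfalso. exact (Hn (Hbelow_m n Hlt)).
  - exfalso. exact (Hm (Hbelow_n m Hlt)).
Qed.

Section Nimbers.
Variables (G : Type) (opts : G -> list G).

Lemma nimber_of_unique (x : G) (n m : nat) :
  nimber_of opts x n -> nimber_of opts x m -> n = m.
Proof.
  intros H. revert m. induction H as [x f n _ IH Hmex].
  intros m Hm. inversion Hm as [x' g m' Hg Hmex']; subst.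
  assert (Efg : map f (opts x) = map g (opts x)).
  { apply map_ext_in. intros y Hy. exact (IH y Hy _ (Hg y Hy)). }
  rewrite Efg in Hmex. exact (is_mex_unique Hmex Hmex').
Qed.

Definition nim (x : G) : nat := epsilon (inhabits 0) (nimber_of opts x).

Hypothesis wf : game_wf opts.

Lemma nimber_of_nim (x : G) : nimber_of opts x (nim x).
Proof.
  induction x as [x IH] using (well_founded_ind wf).
  unfold nim at 1. apply epsilon_spec.
  destruct (is_mex_exists (map nim (opts x))) as [n Hn].
  exists n. exact (NimberI x nim IH Hn).
Qed.

Lemma nimber_of_nimE (x : G) (n : nat) : nimber_of opts x n -> n = nim x.
Proof. intros H. exact (nimber_of_unique H (nimber_of_nim x)). Qed.

Lemma is_mex_nim (x : G) : is_mex (map nim (opts x)) (nim x).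
Proof.
  destruct (nimber_of_nim x) as [x f n Hf Hmex].
  replace (map nim (opts x)) with (map f (opts x)); [exact Hmex|].
  apply map_ext_in. intros y Hy. exact (nimber_of_nimE (Hf y Hy)).
Qed.

Lemma nim_option_neq (x y : G) : is_option opts x y -> nim y <> nim x.
Proof.
  intros Hy Heq. apply (proj1 (is_mex_nim x)).
  rewrite <- Heq. exact (in_map nim _ _ Hy).
Qed.

Lemma nim_option_lt (x : G) (k : nat) :
  k < nim x -> exists y, is_option opts x y /\ nim y = k.
Proof.
  intros Hk. apply (proj2 (is_mex_nim x)), in_map_iff in Hk.
  destruct Hk as [y [Hy Hin]]. exists y. split; assumption.
Qed.

Lemma nim_eq_of_mex (x : G) (n : nat) :
  (forall y, is_option opts x y -> nim y <> n) ->
  (forall k, k < n -> exists y, is_option opts x y /\ nim y = k) ->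
  n = nim x.
Proof.
  intros Hneq Hbelow. apply (is_mex_unique (l := map nim (opts x))); [|exact (is_mex_nim x)].
  split.
  - intros Hin. apply in_map_iff in Hin. destruct Hin as [y [Hy Hin]].
    exact (Hneq y Hin Hy).
  - intros k Hk. destruct (Hbelow k Hk) as [y [Hin Hy]].
    rewrite <- Hy. exact (in_map nim _ _ Hin).
Qed.

Lemma option_irrefl (x : G) : ~ is_option opts x x.
Proof.
  induction x as [x IH] using (well_founded_ind wf).
  intros Hx. exact (IH x Hx Hx).
Qed.

Lemma losing_not_winning (x : G) : losing opts x -> ~ winning opts x.
Proof.
  induction x as [x IH] using (well_founded_ind wf).
  intros HL HW. inversion HW as [x' y Hy Ly]; subst.
  inversion HL as [x' Hall]; subst.
  exact (IH y Hy Ly (Hall y Hy)).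
Qed.

End Nimbers.

Lemma is_option_sum_iff {G1 G2 : Type} (o1 : G1 -> list G1) (o2 : G2 -> list G2)
  (x : G1) (y : G2) (q : G1 * G2) :
  is_option (sum_opts o1 o2) (x, y) q <->
  (exists x', is_option o1 x x' /\ q = (x', y)) \/
  (exists y', is_option o2 y y' /\ q = (x, y')).
Proof.
  unfold is_option, sum_opts; simpl. rewrite in_app_iff, !in_map_iff.
  split; intros [[z [Hz Hin]]|[z [Hz Hin]]]; [left|right|left|right]; exists z; auto.
Qed.

Lemma game_wf_sum {G1 G2 : Type} (o1 : G1 -> list G1) (o2 : G2 -> list G2) :
  game_wf o1 -> game_wf o2 -> game_wf (sum_opts o1 o2).
Proof.
  intros w1 w2 [x y]. revert y.
  induction x as [x IHx] using (well_founded_ind w1).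
  intros y. induction y as [y IHy] using (well_founded_ind w2).
  constructor. intros q Hq. apply is_option_sum_iff in Hq.
  destruct Hq as [[x' [Hx' ->]]|[y' [Hy' ->]]]; auto.
Qed.

Section SpragueGrundy.
Variables (G1 G2 : Type) (o1 : G1 -> list G1) (o2 : G2 -> list G2).
Hypotheses (w1 : game_wf o1) (w2 : game_wf o2).

Local Notation sum := (sum_opts o1 o2).

Lemma outcome_sum (x : G1) (y : G2) :
  (nim o1 x = nim o2 y -> losing sum (x, y)) /\
  (nim o1 x <> nim o2 y -> winning sum (x, y)).
Proof.
  revert x y. cut (forall p, (nim o1 (fst p) = nim o2 (snd p) -> losing sum p) /\
                             (nim o1 (fst p) <> nim o2 (snd p) -> winning sum p)).
  { intros H x y. exact (H (x, y)). }
  intros p. induction p as [[x y] IH] using (well_founded_ind (game_wf_sum w1 w2)).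
  simpl. split.
  - intros Heq. constructor. intros q Hq.
    apply (proj2 (IH q Hq)). apply is_option_sum_iff in Hq.
    destruct Hq as [[x' [Hx' ->]]|[y' [Hy' ->]]]; simpl.
    + rewrite <- Heq. exact (nim_option_neq w1 Hx').
    + rewrite Heq. intros E. exact (nim_option_neq w2 Hy' (eq_sym E)).
  - intros Hneq. destruct (lt_eq_lt_dec (nim o1 x) (nim o2 y)) as [[Hlt|Heq]|Hlt];
      [|contradiction|].
    + destruct (nim_option_lt w2 Hlt) as [y' [Hy' E]].
      assert (Ho : is_option sum (x, y) (x, y')).
      { apply is_option_sum_iff. right. eauto. }
      apply (WinningI _ Ho). apply (proj1 (IH _ Ho)). simpl. auto.
    + destruct (nim_option_lt w1 Hlt) as [x' [Hx' E]].
      assert (Ho : is_option sum (x, y) (x', y)).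
      { apply is_option_sum_iff. left. eauto. }
      apply (WinningI _ Ho). apply (proj1 (IH _ Ho)). simpl. auto.
Qed.

Lemma losing_sum_iff (x : G1) (y : G2) : losing sum (x, y) <-> nim o1 x = nim o2 y.
Proof.
  split; [|apply outcome_sum].
  intros HL. destruct (Nat.eq_dec (nim o1 x) (nim o2 y)) as [E|E]; [exact E|].
  exfalso. exact (losing_not_winning (game_wf_sum w1 w2) HL (proj2 (outcome_sum x y) E)).
Qed.

Lemma winning_sum_iff (x : G1) (y : G2) : winning sum (x, y) <-> nim o1 x <> nim o2 y.
Proof.
  split; [|apply outcome_sum].
  intros HW E. apply losing_sum_iff in E.
  exact (losing_not_winning (game_wf_sum w1 w2) E HW).
Qed.

End SpragueGrundy.

Section Inference.
Variables (G1 G2 : Type) (E : G1 * G2 -> G1 * G2 -> Prop) (L : G1 * G2 -> Prop).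

Definition move1 (p q : G1 * G2) : Prop := E p q /\ snd q = snd p.
Definition move2 (p q : G1 * G2) : Prop := E p q /\ fst q = fst p.

(* [inferred p (i, n, b)]: from the edges [E] and losing nodes [L] below [p]
   one reads off that component 1 (if [i]) or 2 of [p] has nimber [n], and
   [b] tells whether the two nimbers of [p] agree.  The booleans [bb] of the
   premises of [inferred_lose_mex] are irrelevant but must be recorded. *)
Inductive inferred : G1 * G2 -> bool * nat * bool -> Prop :=
| inferred_win_move1 p q i m b :
    move1 p q -> L q -> inferred q (i, m, b) -> inferred p (false, m, false)
| inferred_win_move2 p q i m b :
    move2 p q -> L q -> inferred q (i, m, b) -> inferred p (true, m, false)
| inferred_lose_known p q m b :
    L p -> move1 p q -> inferred q (false, m, b) -> inferred p (false, m, true)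
| inferred_lose_mex p n (g : G1 * G2 -> nat) (bb : G1 * G2 -> bool) :
    L p -> (forall q, move1 p q -> inferred q (true, g q, bb q)) ->
    (forall q, move1 p q -> g q <> n) ->
    (forall k, k < n -> exists q, move1 p q /\ g q = k) ->
    inferred p (true, n, true).

End Inference.

Definition sol_edges {G1 G2 : Type} (o1 : G1 -> list G1) (o2 : G2 -> list G2)
  (S : G1 * G2 -> Prop) (p q : G1 * G2) : Prop :=
  S p /\ S q /\ is_option (sum_opts o1 o2) p q.

Definition sol_losing {G1 G2 : Type} (o1 : G1 -> list G1) (o2 : G2 -> list G2)
  (S : G1 * G2 -> Prop) (p : G1 * G2) : Prop :=
  S p /\ losing (sum_opts o1 o2) p.

Definition answers {G1 G2 : Type} (o1 : G1 -> list G1) (o2 : G2 -> list G2)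
  (x : G1) (y : G2) (r : bool * nat * bool) : Prop :=
  let '(i, n, b) := r in
  (if i then nimber_of o1 x n else nimber_of o2 y n) /\
  (b = true <-> exists m, nimber_of o1 x m /\ nimber_of o2 y m).

Section SolutionTree.
Variables (G1 G2 : Type) (o1 : G1 -> list G1) (o2 : G2 -> list G2).
Hypotheses (w1 : game_wf o1) (w2 : game_wf o2).
Variable S : G1 * G2 -> Prop.

Local Notation sum := (sum_opts o1 o2).

Hypothesis S_losing_closed :
  forall p, S p -> losing sum p -> forall q, is_option sum p q -> S q.
Local Notation E := (sol_edges o1 o2 S).
Local Notation L := (sol_losing o1 o2 S).

Lemma answersE (x : G1) (y : G2) (i : bool) (n : nat) (b : bool) :
  answers o1 o2 x y (i, n, b) <->
  (n = if i then nim o1 x else nim o2 y) /\ b = (nim o1 x =? nim o2 y).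
Proof.
  unfold answers. rewrite (Bool.eq_iff_eq_true b (_ =? _)), Nat.eqb_eq.
  assert (Hagree : (exists m, nimber_of o1 x m /\ nimber_of o2 y m) <-> nim o1 x = nim o2 y).
  { split.
    - intros [m [H1 H2]]. rewrite <- (nimber_of_nimE w1 H1). exact (nimber_of_nimE w2 H2).
    - intros Heq. exists (nim o1 x). split; [|rewrite Heq]; apply nimber_of_nim; assumption. }
  rewrite Hagree. apply and_iff_compat_r.
  destruct i; split; intros H.
  - exact (nimber_of_nimE w1 H).
  - rewrite H. exact (nimber_of_nim w1 x).
  - exact (nimber_of_nimE w2 H).
  - rewrite H. exact (nimber_of_nim w2 y).
Qed.

Lemma move1_sol_edges (x x' : G1) (y y' : G2) :
  move1 E (x, y) (x', y') -> is_option o1 x x' /\ y' = y.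
Proof.
  intros [[_ [_ Ho]] Hsnd]. simpl in Hsnd. subst y'.
  apply is_option_sum_iff in Ho.
  destruct Ho as [[z [Hz Eq]]|[z [Hz Eq]]]; injection Eq; intros; subst; [auto|].
  exfalso. exact (option_irrefl w2 Hz).
Qed.

Lemma move2_sol_edges (x x' : G1) (y y' : G2) :
  move2 E (x, y) (x', y') -> is_option o2 y y' /\ x' = x.
Proof.
  intros [[_ [_ Ho]] Hfst]. simpl in Hfst. subst x'.
  apply is_option_sum_iff in Ho.
  destruct Ho as [[z [Hz Eq]]|[z [Hz Eq]]]; injection Eq; intros; subst; [|auto].
  exfalso. exact (option_irrefl w1 Hz).
Qed.

Lemma move1_of_losing (x x' : G1) (y : G2) :
  L (x, y) -> is_option o1 x x' -> move1 E (x, y) (x', y).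
Proof.
  intros [Sp Lp] Hx'.
  assert (Ho : is_option sum (x, y) (x', y)) by (apply is_option_sum_iff; left; eauto).
  repeat split; auto. exact (S_losing_closed Sp Lp Ho).
Qed.

Lemma inferred_sound (p : G1 * G2) (r : bool * nat * bool) :
  inferred E L p r -> answers o1 o2 (fst p) (snd p) r.
Proof.
  induction 1 as [[x y] [x' y'] i m b Hq [_ Lq] _ IH | [x y] [x' y'] i m b Hq [_ Lq] _ IH
                 | [x y] [x' y'] m b [_ Lp] Hq _ IH | [x y] n g bb Lp _ IH Hneq Hbelow];
    cbn [fst snd] in *; apply answersE.
  - destruct (move1_sol_edges Hq) as [_ ->].
    apply answersE in IH. destruct IH as [Hm _].
    assert (Wp : winning sum (x, y)) by exact (WinningI _ (proj2 (proj2 (proj1 Hq))) Lq).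
    apply (losing_sum_iff w1 w2) in Lq. apply (winning_sum_iff w1 w2) in Wp.
    split; [destruct i; congruence|].
    symmetry. apply Nat.eqb_neq. exact Wp.
  - destruct (move2_sol_edges Hq) as [_ ->].
    apply answersE in IH. destruct IH as [Hm _].
    assert (Wp : winning sum (x, y)) by exact (WinningI _ (proj2 (proj2 (proj1 Hq))) Lq).
    apply (losing_sum_iff w1 w2) in Lq. apply (winning_sum_iff w1 w2) in Wp.
    split; [destruct i; congruence|].
    symmetry. apply Nat.eqb_neq. exact Wp.
  - destruct (move1_sol_edges Hq) as [_ ->].
    apply answersE in IH. destruct IH as [Hm _].
    apply (losing_sum_iff w1 w2) in Lp.
    split; [exact Hm|]. symmetry. apply Nat.eqb_eq. exact Lp.
  - assert (Hg : forall x', is_option o1 x x' -> g (x', y) = nim o1 x').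
    { intros x' Hx'. apply (proj1 (proj1 (answersE _ _ _ _ _) (IH _ (move1_of_losing Lp Hx')))). }
    assert (Hn : n = nim o1 x).
    { apply (nim_eq_of_mex w1).
      - intros x' Hx'. rewrite <- Hg by exact Hx'. exact (Hneq _ (move1_of_losing Lp Hx')).
      - intros k Hk. destruct (Hbelow k Hk) as [[x' y'] [Hq Hgk]].
        destruct (move1_sol_edges Hq) as [Hx' ->].
        exists x'. split; [exact Hx'|]. rewrite <- Hg by exact Hx'. exact Hgk. }
    destruct Lp as [_ Lp]. apply (losing_sum_iff w1 w2) in Lp.
    split; [exact Hn|]. symmetry. apply Nat.eqb_eq. exact Lp.
Qed.


Hypothesis S_winning_witness :
  forall p, S p -> winning sum p -> exists q, is_option sum p q /\ losing sum q /\ S q.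

Lemma inferred_exists (p : G1 * G2) : S p -> exists r, inferred E L p r.
Proof.
  induction p as [[x y] IH] using (well_founded_ind (game_wf_sum w1 w2)). intros Sp.
  destruct (Nat.eq_dec (nim o1 x) (nim o2 y)) as [Heq|Hneq].
  - apply (losing_sum_iff w1 w2) in Heq.
    assert (Lp : L (x, y)) by (split; assumption).
    destruct (classic (exists q m b, move1 E (x, y) q /\ inferred E L q (false, m, b)))
      as [[q [m [b [Hq Hr]]]]|Hnone].
    + exists (false, m, true). exact (inferred_lose_known Lp Hq Hr).
    + exists (true, nim o1 x, true).
      apply (inferred_lose_mex (g := fun q => nim o1 (fst q))
               (bb := fun q => nim o1 (fst q) =? nim o2 (snd q))); [exact Lp| | |].
      * intros [x' y'] Hmove. destruct (move1_sol_edges Hmove) as [_ ->].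
        pose proof Hmove as [[_ [Sq Hq]] _].
        destruct (IH _ Hq Sq) as [[[i m] b] Hr].
        destruct i; [|exfalso; apply Hnone; eauto].
        destruct (proj1 (answersE _ _ _ _ _) (inferred_sound Hr)) as [-> ->]. exact Hr.
      * intros [x' y'] Hq. destruct (move1_sol_edges Hq) as [Hx' ->].
        exact (nim_option_neq w1 Hx').
      * intros k Hk. destruct (nim_option_lt w1 Hk) as [x' [Hx' Hk']].
        exists (x', y). split; [exact (move1_of_losing Lp Hx')|exact Hk'].
  - apply (winning_sum_iff w1 w2) in Hneq.
    destruct (S_winning_witness Sp Hneq) as [q [Hq [Lq Sq]]].
    destruct (IH q Hq Sq) as [[[i m] b] Hr].
    assert (HE : E (x, y) q) by (repeat split; assumption).
    apply is_option_sum_iff in Hq. destruct Hq as [[x' [_ ->]]|[y' [_ ->]]].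
    + exists (false, m, false). exact (inferred_win_move1 (conj HE eq_refl) (conj Sq Lq) Hr).
    + exists (true, m, false). exact (inferred_win_move2 (conj HE eq_refl) (conj Sq Lq) Hr).
Qed.

End SolutionTree.

Definition determined_answer {G1 G2 : Type} (d : @sol_data G1 G2) (r : bool * nat * bool) :
  Prop :=
  forall (o1 : G1 -> list G1) (o2 : G2 -> list G2), game_wf o1 -> game_wf o2 ->
  forall P1 P2 S, solution_tree (sum_opts o1 o2) (P1, P2) S ->
  data_of o1 o2 P1 P2 S = d -> answers o1 o2 P1 P2 r.

Lemma solution_data_determines_answer {G1 G2 : Type}
  (o1 : G1 -> list G1) (o2 : G2 -> list G2) (P1 : G1) (P2 : G2) (S : G1 * G2 -> Prop) :
  game_wf o1 -> game_wf o2 -> solution_tree (sum_opts o1 o2) (P1, P2) S ->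
  exists r, determined_answer (data_of o1 o2 P1 P2 S) r.
Proof.
  intros w1 w2 [SP [_ [Hclosed Hwitness]]].
  destruct (inferred_exists w1 w2 Hclosed Hwitness SP) as [r Hr].
  exists r. intros o1' o2' w1' w2' P1' P2' S' [_ [_ [Hclosed' _]]] Hdata.
  unfold data_of in Hdata. injection Hdata as -> -> -> HE HL.
  change (sol_edges o1' o2' S = sol_edges o1 o2 S) in HE.
  change (sol_losing o1' o2' S = sol_losing o1 o2 S) in HL.
  rewrite <- HE, <- HL in Hr.
  exact (inferred_sound w1' w2' Hclosed' Hr).
Qed.

Theorem mainTheorem1 (G1 G2 : Type) :
  exists F : @sol_data G1 G2 -> bool * nat * bool,
  forall (opts1 : G1 -> list G1) (opts2 : G2 -> list G2),
    game_wf opts1 -> game_wf opts2 ->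
  forall (P1 : G1) (P2 : G2) (S : G1 * G2 -> Prop),
    solution_tree (sum_opts opts1 opts2) (P1, P2) S ->
    let '(i, n, b) := F (data_of opts1 opts2 P1 P2 S) in
    (if i then nimber_of opts1 P1 n else nimber_of opts2 P2 n) /\
    (b = true <-> exists m, nimber_of opts1 P1 m /\ nimber_of opts2 P2 m).
Proof.
  exists (fun d => epsilon (inhabits (true, 0, true)) (determined_answer d)).
  intros o1 o2 w1 w2 P1 P2 S HS.
  exact (epsilon_spec (inhabits (true, 0, true)) _ (solution_data_determines_answer w1 w2 HS)
           o1 o2 w1 w2 P1 P2 S HS eq_refl).
Qed.
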